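(* If a triangulated category $\mathcal{C}$ admits a morphism-faithful prime rank function, then $\mathcal{C}$ is simple.
   Context: A rank function on $\mathcal{C}$ assigns to each morphism $f$ a real $\rho(f)\geq0$ with $\rho(\Sigma f)=\rho(f)$, $\rho(f\oplus g)=\rho(f)+\rho(g)$, and $\rho(f)+\rho(g)=\rho(\mathrm{id}_Y)$ for every exact triangle $X\xrightarrow{f}Y\xrightarrow{g}Z\rightsquigarrow$. It is morphism-faithful if $\rho(f)\neq0$ for every nonzero morphism $f$; prime if its values are integers and $\mathcal{C}$ has a generator $X$ (an object whose smallest thick subcategory containing it is $\mathcal{C}$) with $\rho(\mathrm{id}_X)=1$. A triangulated category is simple if every exact triangle is split (isomorphic to a direct sum of triangles each having an isomorphism as one of its arrows) and it is generated as a triangulated category by one nonzero indecomposable object. *)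

From HB Require Import structures.
From mathcomp Require Import all_boot all_order all_algebra.
From mathcomp Require Import Rstruct.
Set Implicit Arguments. Unset Strict Implicit. Unset Printing Implicit Defensive.
Import GRing.Theory Num.Theory.
Local Open Scope ring_scope.

Record PreAddCat := {
  Obj : Type;
  Hom : Obj -> Obj -> zmodType;
  idm : forall X : Obj, Hom X X;
  comp : forall X Y Z : Obj, Hom Y Z -> Hom X Y -> Hom X Z;
  comp_assoc : forall X Y Z W (h : Hom Z W) (g : Hom Y Z) (f : Hom X Y),
      comp (comp h g) f = comp h (comp g f);
  comp_id_l : forall X Y (f : Hom X Y), comp (idm Y) f = f;
  comp_id_r : forall X Y (f : Hom X Y), comp f (idm X) = f;
  comp_add_l : forall X Y Z (g1 g2 : Hom Y Z) (f : Hom X Y),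
      comp (g1 + g2) f = comp g1 f + comp g2 f;
  comp_add_r : forall X Y Z (g : Hom Y Z) (f1 f2 : Hom X Y),
      comp g (f1 + f2) = comp g f1 + comp g f2
}.
Arguments idm {p} X.
Arguments comp {p X Y Z}.

Section PreAdd.
Variable C : PreAddCat.
Definition is_iso (X Y : Obj C) (f : Hom X Y) : Prop :=
  exists g : Hom Y X, comp g f = idm X /\ comp f g = idm Y.
Definition is_zero (X : Obj C) : Prop := idm X = 0.
End PreAdd.

Record AddCat := {
  pac :> PreAddCat;
  zo : Obj pac;
  zo_zero : is_zero zo;
  bs : Obj pac -> Obj pac -> Obj pac;
  bin1 : forall X Y, Hom X (bs X Y);
  bin2 : forall X Y, Hom Y (bs X Y);
  bp1 : forall X Y, Hom (bs X Y) X;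
  bp2 : forall X Y, Hom (bs X Y) Y;
  bp1_in1 : forall X Y, comp (bp1 X Y) (bin1 X Y) = idm X;
  bp2_in2 : forall X Y, comp (bp2 X Y) (bin2 X Y) = idm Y;
  bp1_in2 : forall X Y, comp (bp1 X Y) (bin2 X Y) = 0;
  bp2_in1 : forall X Y, comp (bp2 X Y) (bin1 X Y) = 0;
  bs_id : forall X Y,
      comp (bin1 X Y) (bp1 X Y) + comp (bin2 X Y) (bp2 X Y) = idm (bs X Y)
}.
Arguments zo {a}.
Arguments bs {a}.
Arguments bin1 {a X Y}.
Arguments bin2 {a X Y}.
Arguments bp1 {a X Y}.
Arguments bp2 {a X Y}.

Definition msum (C : AddCat) (X1 X2 Y1 Y2 : Obj C)
    (f : Hom X1 Y1) (g : Hom X2 Y2) : Hom (bs X1 X2) (bs Y1 Y2) :=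
  comp bin1 (comp f bp1) + comp bin2 (comp g bp2).

Record SuspCat := {
  ac :> AddCat;
  Sob : Obj ac -> Obj ac;
  Smor : forall X Y : Obj ac, Hom X Y -> Hom (Sob X) (Sob Y);
  Smor_id : forall X, Smor (idm X) = idm (Sob X);
  Smor_comp : forall X Y Z (g : Hom Y Z) (f : Hom X Y),
      Smor (comp g f) = comp (Smor g) (Smor f);
  Smor_add : forall X Y (f g : Hom X Y), Smor (f + g) = Smor f + Smor g;
  Smor_bij : forall X Y, bijective (@Smor X Y);
  Sob_ess : forall Y, exists X (f : Hom (Sob X) Y), is_iso f
}.
Arguments Sob {s}.
Arguments Smor {s X Y}.

Section Triangles.
Variable C : SuspCat.

Record triangle := Tri {
  tX : Obj C; tY : Obj C; tZ : Obj C;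
  tf : Hom tX tY; tg : Hom tY tZ; th : Hom tZ (Sob tX) }.

Definition tri_morph (T T' : triangle) (a : Hom (tX T) (tX T'))
    (b : Hom (tY T) (tY T')) (c : Hom (tZ T) (tZ T')) : Prop :=
  [/\ comp b (tf T) = comp (tf T') a,
      comp c (tg T) = comp (tg T') b &
      comp (Smor a) (th T) = comp (th T') c].

Definition tri_iso (T T' : triangle) : Prop :=
  exists (a : Hom (tX T) (tX T')) (b : Hom (tY T) (tY T')) (c : Hom (tZ T) (tZ T')),
    [/\ tri_morph a b c, is_iso a, is_iso b & is_iso c].

Definition rotate (T : triangle) : triangle :=
  @Tri (tY T) (tZ T) (Sob (tX T)) (tg T) (th T) (- Smor (tf T)).

Definition tsum (T1 T2 : triangle) : triangle :=
  @Tri (bs (tX T1) (tX T2)) (bs (tY T1) (tY T2)) (bs (tZ T1) (tZ T2))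
    (msum (tf T1) (tf T2)) (msum (tg T1) (tg T2))
    (comp (Smor bin1) (comp (th T1) bp1) + comp (Smor bin2) (comp (th T2) bp2)).

Fixpoint tsum_list (T0 : triangle) (Ts : seq triangle) : triangle :=
  match Ts with
  | [::] => T0
  | T1 :: Ts' => tsum T0 (tsum_list T1 Ts')
  end.

Definition has_iso_arrow (T : triangle) : Prop :=
  is_iso (tf T) \/ is_iso (tg T) \/ is_iso (th T).

End Triangles.

Record TriCat := {
  sc :> SuspCat;
  dist : triangle sc -> Prop;
  TR1_iso : forall T T', tri_iso T T' -> dist T -> dist T';
  TR1_id : forall X : Obj sc, dist (@Tri sc X X zo (idm X) 0 0);
  TR1_ext : forall (X Y : Obj sc) (f : Hom X Y),
      exists Z (g : Hom Y Z) (h : Hom Z (Sob X)), dist (Tri f g h);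
  TR2 : forall T, dist T <-> dist (rotate T);
  TR3 : forall T T' (a : Hom (tX T) (tX T')) (b : Hom (tY T) (tY T')),
      dist T -> dist T' -> comp b (tf T) = comp (tf T') a ->
      exists c, tri_morph a b c;
  TR4 : forall (X Y Z Z' X' Y' : Obj sc) (f : Hom X Y) (g : Hom Y Z)
      (j : Hom Y Z') (k : Hom Z' (Sob X))
      (l : Hom Z X') (i : Hom X' (Sob Y))
      (m : Hom Z Y') (n : Hom Y' (Sob X)),
      dist (Tri f j k) -> dist (Tri g l i) -> dist (Tri (comp g f) m n) ->
      exists (u : Hom Z' Y') (v : Hom Y' X'),
        [/\ comp u j = comp m g, comp n u = k, comp v m = l,
            comp i v = comp (Smor f) n &
            dist (Tri u v (comp (Smor j) i))]
}.

Section TriDefs.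
Variable C : TriCat.

Definition tri_subcat (P : Obj C -> Prop) : Prop :=
  [/\ P zo,
      (forall (X Y : Obj C) (f : Hom X Y), is_iso f -> P X -> P Y),
      (forall X : Obj C, P X <-> P (Sob X)) &
      (forall T : triangle C, dist T -> P (tX T) -> P (tY T) -> P (tZ T))].

Definition thick_subcat (P : Obj C -> Prop) : Prop :=
  tri_subcat P /\ (forall X Y : Obj C, P (bs X Y) -> P X).

Definition thick_generator (X : Obj C) : Prop :=
  forall P, thick_subcat P -> P X -> forall Y, P Y.

Definition tri_generator (X : Obj C) : Prop :=
  forall P, tri_subcat P -> P X -> forall Y, P Y.

Definition indecomposable (X : Obj C) : Prop :=
  ~ is_zero X /\
  forall (A B : Obj C) (f : Hom X (bs A B)), is_iso f -> is_zero A \/ is_zero B.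

Definition split_triangle (T : triangle C) : Prop :=
  exists (T0 : triangle C) (Ts : seq (triangle C)),
    [/\ tri_iso T (tsum_list T0 Ts), has_iso_arrow T0 &
        List.Forall (@has_iso_arrow C) Ts].

Definition simple_tricat : Prop :=
  (forall T : triangle C, dist T -> split_triangle T) /\
  exists X : Obj C, ~ is_zero X /\ indecomposable X /\ tri_generator X.

Definition rank_function (rho : forall X Y : Obj C, Hom X Y -> Rdefinitions.R) : Prop :=
  [/\ (forall X Y (f : Hom X Y), 0 <= rho _ _ f),
      (forall X Y (f : Hom X Y), rho _ _ (Smor f) = rho _ _ f),
      (forall X1 X2 Y1 Y2 (f : Hom X1 Y1) (g : Hom X2 Y2),
          rho _ _ (msum f g) = rho _ _ f + rho _ _ g) &
      (forall T : triangle C, dist T ->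
          rho _ _ (tf T) + rho _ _ (tg T) = rho _ _ (idm (tY T)))].

Definition morphism_faithful (rho : forall X Y : Obj C, Hom X Y -> Rdefinitions.R) : Prop :=
  forall X Y (f : Hom X Y), f != 0 -> rho _ _ f != 0.

Definition prime_rank (rho : forall X Y : Obj C, Hom X Y -> Rdefinitions.R) : Prop :=
  (forall X Y (f : Hom X Y), exists z : int, rho _ _ f = z%:~R) /\
  exists X : Obj C, thick_generator X /\ rho _ _ (idm X) = 1.

End TriDefs.

(* Integrality and morphism-faithfulness give every nonzero morphism rank at
   least 1.  Hence if [rho (idm S) = 1], every nonzero [u : S -> A] is a split
   monomorphism: in a triangle [S -> A -> Z -> ΣS] on [u], the map [Z -> ΣS]
   has rank [1 - rho (Σu) = 0], so it vanishes.  This holds on the whole shift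
   orbit of the rank-one generator [G], and since [G] generates thickly, every
   nonzero object receives a nonzero morphism from that orbit.  So every
   Hom-exact triangle with a nonzero vertex has a retract of one of the forms
   [S = S -> 0 -> ΣS], [0 -> S = S -> 0], [S -> 0 -> ΣS = ΣS], whose complement
   is Hom-exact of smaller total rank, and induction on the rank splits every
   exact triangle.  Splitting orbit objects off an arbitrary object in the same
   way shows that [G] generates as a triangulated category, and [G] is
   indecomposable since its rank is 1. *)

From Pilot Require Import Defs.
From mathcomp Require Import all_boot all_order ssralg ssrnum ssrint.
From mathcomp Require Import Rstruct zify lra.
From Stdlib Require Import Classical.
Set Implicit Arguments. Unset Strict Implicit.
Import GRing.Theory Num.Theory.
Local Open Scope ring_scope.

Local Notation "g ⊚ f" := (Defs.comp g f) (at level 40, left associativity).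
Local Notation bin1 := Defs.bin1.
Local Notation bin2 := Defs.bin2.

Section PreAdditive.
Variable C : PreAddCat.
Implicit Types A X Y Z W : Obj C.

Lemma compA X Y Z W (h : Hom Z W) (g : Hom Y Z) (f : Hom X Y) :
  h ⊚ (g ⊚ f) = h ⊚ g ⊚ f.
Proof. by rewrite comp_assoc. Qed.

Lemma comp0l X Y Z (f : Hom X Y) : (0 : Hom Y Z) ⊚ f = 0.
Proof.
have E := comp_add_l (0 : Hom Y Z) 0 f; rewrite addr0 in E.
by apply: (addrI ((0 : Hom Y Z) ⊚ f)); rewrite -E addr0.
Qed.

Lemma comp0r X Y Z (g : Hom Y Z) : g ⊚ (0 : Hom X Y) = 0.
Proof.
have E := comp_add_r g (0 : Hom X Y) 0; rewrite addr0 in E.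
by apply: (addrI (g ⊚ (0 : Hom X Y))); rewrite -E addr0.
Qed.

Lemma compNl X Y Z (g : Hom Y Z) (f : Hom X Y) : (- g) ⊚ f = - (g ⊚ f).
Proof. by apply/eqP; rewrite -addr_eq0 -comp_add_l addNr comp0l. Qed.

Lemma compNr X Y Z (g : Hom Y Z) (f : Hom X Y) : g ⊚ (- f) = - (g ⊚ f).
Proof. by apply/eqP; rewrite -addr_eq0 -comp_add_r addNr comp0r. Qed.

Lemma compBl X Y Z (g1 g2 : Hom Y Z) (f : Hom X Y) : (g1 - g2) ⊚ f = g1 ⊚ f - g2 ⊚ f.
Proof. by rewrite comp_add_l compNl. Qed.

Lemma compBr X Y Z (g : Hom Y Z) (f1 f2 : Hom X Y) : g ⊚ (f1 - f2) = g ⊚ f1 - g ⊚ f2.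
Proof. by rewrite comp_add_r compNr. Qed.

Lemma hom_from_zero X Y (f : Hom X Y) : is_zero X -> f = 0.
Proof. by move=> HX; rewrite -(comp_id_r f) HX comp0r. Qed.

Lemma iso_id X : is_iso (idm X).
Proof. by exists (idm X); split; exact: comp_id_l. Qed.

Lemma iso_comp X Y Z (g : Hom Y Z) (f : Hom X Y) : is_iso g -> is_iso f -> is_iso (g ⊚ f).
Proof.
move=> [g' [Hg1 Hg2]] [f' [Hf1 Hf2]]; exists (f' ⊚ g'); split.
  by rewrite comp_assoc -(comp_assoc g') Hg1 comp_id_l Hf1.
by rewrite comp_assoc -(comp_assoc f) Hf2 comp_id_l Hg2.
Qed.

Lemma iso_opp X Y (f : Hom X Y) : is_iso f -> is_iso (- f).
Proof. by move=> [g [H1 H2]]; exists (- g); split; rewrite compNl compNr opprK. Qed.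

Lemma iso_between_zero X Y (f : Hom X Y) : is_zero X -> is_zero Y -> is_iso f.
Proof. by move=> HX HY; exists 0; rewrite comp0l comp0r. Qed.

Lemma iso_sym X Y (f : Hom X Y) : is_iso f -> exists g : Hom Y X, is_iso g.
Proof. by move=> [g [H1 H2]]; exists g, f. Qed.

Lemma comp_iso_neq0 X Y Z (g : Hom Y Z) (f : Hom X Y) : is_iso f -> g != 0 -> g ⊚ f != 0.
Proof.
move=> [f' [_ Hf]] Hg; apply: contraNneq Hg => E.
by rewrite -(comp_id_r g) -Hf compA E comp0l.
Qed.

Definition biprod_decomp A X A' (i : Hom A X) (p : Hom X A) (j : Hom A' X) (q : Hom X A') :=
  [/\ p ⊚ i = idm A, q ⊚ j = idm A', p ⊚ j = 0, q ⊚ i = 0 & i ⊚ p + j ⊚ q = idm X].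

Section Decomposition.
Variables (A X A' : Obj C) (i : Hom A X) (p : Hom X A) (j : Hom A' X) (q : Hom X A').
Hypothesis D : biprod_decomp i p j q.

Lemma decomp_compl : j ⊚ q = idm X - i ⊚ p.
Proof. by case: D => _ _ _ _ <-; rewrite addrAC subrr add0r. Qed.

Lemma decomp_compl_inv A'' (j' : Hom A'' X) (q' : Hom X A'') :
  biprod_decomp i p j' q' -> (q' ⊚ j) ⊚ (q ⊚ j') = idm A''.
Proof.
move=> [_ Hqj' Hpj' _ _].
rewrite comp_assoc -(comp_assoc j) decomp_compl compBl comp_id_l compBr comp_assoc.
by rewrite Hqj' Hpj' !comp0r subr0.
Qed.

End Decomposition.

Lemma decomp_compl_iso A X A' A'' (i : Hom A X) (p : Hom X A) (j : Hom A' X) (q : Hom X A')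
    (j' : Hom A'' X) (q' : Hom X A'') :
  biprod_decomp i p j q -> biprod_decomp i p j' q' -> is_iso (q ⊚ j').
Proof.
move=> D D'; exists (q' ⊚ j).
by split; [exact (decomp_compl_inv D D') | exact (decomp_compl_inv D' D)].
Qed.

(* A morphism compatible with the split summands [U1] of [U] and [V1] of [V] is
   diagonal: it maps the complement [U'] to [V'] by [qV F jU]. *)
Lemma decomp_compl_comm U V U1 V1 U' V' (F : Hom U V) (F1 : Hom U1 V1)
    (iU : Hom U1 U) (pU : Hom U U1) (jU : Hom U' U) (qU : Hom U U')
    (iV : Hom V1 V) (pV : Hom V V1) (jV : Hom V' V) (qV : Hom V V') :
  biprod_decomp iU pU jU qU -> biprod_decomp iV pV jV qV ->
  F ⊚ iU = iV ⊚ F1 -> pV ⊚ F = F1 ⊚ pU ->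
  F ⊚ jU = jV ⊚ (qV ⊚ F ⊚ jU) /\ qV ⊚ F = (qV ⊚ F ⊚ jU) ⊚ qU.
Proof.
move=> DU DV Hi Hp; have [_ _ HpjU _ _] := DU; have [_ _ _ HqiV _] := DV.
split.
  rewrite !compA (decomp_compl DV) !compBl comp_id_l !comp_assoc (compA pV) Hp.
  by rewrite comp_assoc HpjU !comp0r subr0.
rewrite !comp_assoc (decomp_compl DU) compBr comp_id_r (compA F) Hi compBr.
by rewrite !comp_assoc (compA qV) HqiV comp0l subr0.
Qed.

End PreAdditive.

Section Additive.
Variable C : AddCat.
Implicit Types A B U V X Y Z : Obj C.

Lemma idm_zo : idm (@zo C) = 0.
Proof. exact: zo_zero. Qed.

Lemma bs_decomp A B : biprod_decomp (@bin1 C A B) bp1 bin2 bp2.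
Proof.
by split; [apply: bp1_in1 | apply: bp2_in2 | apply: bp1_in2 | apply: bp2_in1 | apply: bs_id].
Qed.

Lemma bs_hom_ext X1 X2 Z (F G : Hom (bs X1 X2) Z) :
  F ⊚ bin1 = G ⊚ bin1 -> F ⊚ bin2 = G ⊚ bin2 -> F = G.
Proof.
move=> H1 H2; rewrite -(comp_id_r F) -(comp_id_r G) -bs_id !comp_add_r.
by rewrite !compA H1 H2.
Qed.

Lemma pair_comp X1 X2 U U' (x : Hom U X1) (y : Hom U X2) (z : Hom U' U) :
  (bin1 ⊚ x + bin2 ⊚ y) ⊚ z = bin1 ⊚ (x ⊚ z) + bin2 ⊚ (y ⊚ z).
Proof. by rewrite comp_add_l !comp_assoc. Qed.

Lemma bp1_pair X1 X2 U (x : Hom U X1) (y : Hom U X2) : bp1 ⊚ (bin1 ⊚ x + bin2 ⊚ y) = x.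
Proof. by rewrite comp_add_r !compA bp1_in1 bp1_in2 comp_id_l comp0l addr0. Qed.

Lemma bp2_pair X1 X2 U (x : Hom U X1) (y : Hom U X2) : bp2 ⊚ (bin1 ⊚ x + bin2 ⊚ y) = y.
Proof. by rewrite comp_add_r !compA bp2_in1 bp2_in2 comp_id_l comp0l add0r. Qed.

Lemma copair_bin1 X1 X2 V (u : Hom X1 V) (v : Hom X2 V) : (u ⊚ bp1 + v ⊚ bp2) ⊚ bin1 = u.
Proof. by rewrite comp_add_l !comp_assoc bp1_in1 bp2_in1 comp_id_r comp0r addr0. Qed.

Lemma copair_bin2 X1 X2 V (u : Hom X1 V) (v : Hom X2 V) : (u ⊚ bp1 + v ⊚ bp2) ⊚ bin2 = v.
Proof. by rewrite comp_add_l !comp_assoc bp1_in2 bp2_in2 comp_id_r comp0r add0r. Qed.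

Lemma copair_pair X1 X2 U V (u : Hom X1 V) (v : Hom X2 V) (x : Hom U X1) (y : Hom U X2) :
  (u ⊚ bp1 + v ⊚ bp2) ⊚ (bin1 ⊚ x + bin2 ⊚ y) = u ⊚ x + v ⊚ y.
Proof. by rewrite comp_add_r !compA copair_bin1 copair_bin2. Qed.

Lemma msumE X1 X2 Y1 Y2 (f : Hom X1 Y1) (g : Hom X2 Y2) :
  msum f g = bin1 ⊚ f ⊚ bp1 + bin2 ⊚ g ⊚ bp2.
Proof. by rewrite /msum !compA. Qed.

Lemma msum_bin1 X1 X2 Y1 Y2 (f : Hom X1 Y1) (g : Hom X2 Y2) : msum f g ⊚ bin1 = bin1 ⊚ f.
Proof. by rewrite msumE copair_bin1. Qed.

Lemma msum_bin2 X1 X2 Y1 Y2 (f : Hom X1 Y1) (g : Hom X2 Y2) : msum f g ⊚ bin2 = bin2 ⊚ g.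
Proof. by rewrite msumE copair_bin2. Qed.

Lemma bp1_msum X1 X2 Y1 Y2 (f : Hom X1 Y1) (g : Hom X2 Y2) : bp1 ⊚ msum f g = f ⊚ bp1.
Proof. exact: bp1_pair. Qed.

Lemma bp2_msum X1 X2 Y1 Y2 (f : Hom X1 Y1) (g : Hom X2 Y2) : bp2 ⊚ msum f g = g ⊚ bp2.
Proof. exact: bp2_pair. Qed.

Lemma msum_comp X1 X2 Y1 Y2 Z1 Z2 (f : Hom Y1 Z1) (g : Hom Y2 Z2)
    (f' : Hom X1 Y1) (g' : Hom X2 Y2) :
  msum f g ⊚ msum f' g' = msum (f ⊚ f') (g ⊚ g').
Proof.
apply: bs_hom_ext.
  by rewrite comp_assoc msum_bin1 compA !msum_bin1 comp_assoc.
by rewrite comp_assoc msum_bin2 compA !msum_bin2 comp_assoc.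
Qed.

Lemma msum_id X1 X2 : msum (idm X1) (idm X2) = idm (bs X1 X2).
Proof. by rewrite /msum !comp_id_l bs_id. Qed.

Lemma msum_iso X1 X2 Y1 Y2 (f : Hom X1 Y1) (g : Hom X2 Y2) :
  is_iso f -> is_iso g -> is_iso (msum f g).
Proof.
move=> [f' [H1 H2]] [g' [H3 H4]]; exists (msum f' g').
by rewrite !msum_comp H1 H2 H3 H4 !msum_id.
Qed.

Lemma biprod_decomp_iso A X A' (i : Hom A X) (p : Hom X A) (j : Hom A' X) (q : Hom X A') :
  biprod_decomp i p j q -> is_iso (bin1 ⊚ p + bin2 ⊚ q).
Proof.
move=> [Hpi Hqj Hpj Hqi Hsum]; exists (i ⊚ bp1 + j ⊚ bp2); split.
  by rewrite copair_pair.
apply: bs_hom_ext; rewrite comp_assoc comp_id_l ?copair_bin1 ?copair_bin2 pair_comp.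
  by rewrite Hpi Hqi comp0r addr0 comp_id_r.
by rewrite Hpj Hqj comp0r add0r comp_id_r.
Qed.

End Additive.

Section Suspension.
Variable C : SuspCat.
Implicit Types A X Y Z W : Obj C.

Lemma Smor0 X Y : Smor (0 : Hom X Y) = 0.
Proof.
have E := Smor_add (0 : Hom X Y) 0; rewrite addr0 in E.
by apply: (addrI (Smor (0 : Hom X Y))); rewrite -E addr0.
Qed.

Lemma SmorN X Y (f : Hom X Y) : Smor (- f) = - Smor f.
Proof. by apply/eqP; rewrite -addr_eq0 -Smor_add addNr Smor0. Qed.

Lemma Smor_inj X Y : injective (@Smor C X Y).
Proof. exact: bij_inj (Smor_bij X Y). Qed.

Lemma Smor_surj X Y (g : Hom (Sob X) (Sob Y)) : exists f, Smor f = g.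
Proof. by case: (Smor_bij X Y) => h _ K; exists (h g). Qed.

Lemma Smor_eq0 X Y (f : Hom X Y) : Smor f = 0 -> f = 0.
Proof. by rewrite -(Smor0 X Y) => /Smor_inj. Qed.

Lemma Sob_zero X : is_zero X -> is_zero (Sob X).
Proof. by move=> H; rewrite /is_zero -Smor_id H Smor0. Qed.

Lemma biprod_decomp_S A X A' (i : Hom A X) (p : Hom X A) (j : Hom A' X) (q : Hom X A') :
  biprod_decomp i p j q -> biprod_decomp (Smor i) (Smor p) (Smor j) (Smor q).
Proof.
move=> [H1 H2 H3 H4 H5]; split; rewrite -?Smor_comp.
- by rewrite H1 Smor_id.
- by rewrite H2 Smor_id.
- by rewrite H3 Smor0.
- by rewrite H4 Smor0.
- by rewrite -Smor_add H5 Smor_id.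
Qed.

Lemma tri_morph_comp (T1 T2 T3 : triangle C) a b c a' b' c' :
  tri_morph (T:=T1) (T':=T2) a b c -> tri_morph (T:=T2) (T':=T3) a' b' c' ->
  tri_morph (a' ⊚ a) (b' ⊚ b) (c' ⊚ c).
Proof.
move=> [M1 M2 M3] [N1 N2 N3]; split.
- by rewrite comp_assoc M1 compA N1 comp_assoc.
- by rewrite comp_assoc M2 compA N2 comp_assoc.
- by rewrite Smor_comp comp_assoc M3 compA N3 comp_assoc.
Qed.

Lemma tri_iso_refl (T : triangle C) : tri_iso T T.
Proof.
exists (idm _), (idm _), (idm _); split; try exact: iso_id.
by split; rewrite ?Smor_id !comp_id_l !comp_id_r.
Qed.

Lemma tri_iso_trans (T1 T2 T3 : triangle C) : tri_iso T1 T2 -> tri_iso T2 T3 -> tri_iso T1 T3.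
Proof.
move=> [a [b [c [M Ha Hb Hc]]]] [a' [b' [c' [M' Ha' Hb' Hc']]]].
exists (a' ⊚ a), (b' ⊚ b), (c' ⊚ c); split; try exact: iso_comp.
exact: tri_morph_comp M M'.
Qed.

Lemma tri_iso_tsum (T1 T T' : triangle C) : tri_iso T T' -> tri_iso (tsum T1 T) (tsum T1 T').
Proof.
move=> [a [b [c [[M1 M2 M3] Ha Hb Hc]]]].
exists (msum (idm _) a), (msum (idm _) b), (msum (idm _) c); split;
  try (apply: msum_iso => //; exact: iso_id).
split => /=.
- by rewrite !msum_comp !comp_id_l !comp_id_r M1.
- by rewrite !msum_comp !comp_id_l !comp_id_r M2.
- rewrite comp_add_r comp_add_l !compA -!Smor_comp msum_bin1 msum_bin2 !comp_id_r.
  rewrite !comp_assoc bp1_msum bp2_msum comp_id_l Smor_comp !comp_assoc (compA (Smor a)) M3.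
  by rewrite !comp_assoc.
Qed.

Inductive shift_orbit X : Obj C -> Prop :=
  | orbit_refl : shift_orbit X X
  | orbit_iso W1 W2 (f : Hom W1 W2) : is_iso f -> shift_orbit X W1 -> shift_orbit X W2
  | orbit_S W : shift_orbit X W -> shift_orbit X (Sob W)
  | orbit_Sinv W : shift_orbit X (Sob W) -> shift_orbit X W.

Lemma orbit_iso_inv X W1 W2 (f : Hom W1 W2) : is_iso f -> shift_orbit X W2 -> shift_orbit X W1.
Proof. by move=> /iso_sym [g Hg]; exact: orbit_iso Hg. Qed.

Lemma orbit_hom_transport G X W : shift_orbit X W ->
  forall S (s : Hom S W), shift_orbit G S -> s != 0 ->
  exists S', shift_orbit G S' /\ exists s' : Hom S' X, s' != 0.
Proof.
elim=> [|W1 W2 f [g [Hgf Hfg]] _ IH|W1 _ IH|W1 _ IH] S s HS Hs.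
- by exists S; split => //; exists s.
- apply: (IH S (g ⊚ s) HS).
  by apply: contraNneq Hs => E; rewrite -(comp_id_l s) -Hfg comp_assoc E comp0r.
- have [S0 [psi Hpsi]] := Sob_ess S.
  have [s0 Hs0] := Smor_surj (s ⊚ psi).
  apply: (IH S0 s0 (orbit_Sinv (orbit_iso_inv Hpsi HS))).
  by apply: contraNneq (comp_iso_neq0 Hpsi Hs) => E; rewrite -Hs0 E Smor0.
- apply: (IH (Sob S) (Smor s) (orbit_S HS)).
  by apply: contraNneq Hs => /Smor_eq0 ->.
Qed.

Definition tri_complex (T : triangle C) :=
  [/\ tg T ⊚ tf T = 0, th T ⊚ tg T = 0 & Smor (tf T) ⊚ th T = 0].

(* The complement of a retract of an exact triangle is not known to be exact,
   only Hom-exact; hence the splitting induction runs over Hom-exact triangles. *)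
Definition hom_exact (T : triangle C) := tri_complex T /\
  [/\ forall W (u : Hom W (tY T)), tg T ⊚ u = 0 -> exists v, u = tf T ⊚ v,
      forall W (u : Hom W (tZ T)), th T ⊚ u = 0 -> exists v, u = tg T ⊚ v &
      forall W (u : Hom W (Sob (tX T))), Smor (tf T) ⊚ u = 0 -> exists v, u = th T ⊚ v].

Definition tri_retract (T1 T : triangle C) :=
  exists (iX : Hom (tX T1) (tX T)) (iY : Hom (tY T1) (tY T)) (iZ : Hom (tZ T1) (tZ T))
         (pX : Hom (tX T) (tX T1)) (pY : Hom (tY T) (tY T1)) (pZ : Hom (tZ T) (tZ T1)),
  [/\ tri_morph iX iY iZ, tri_morph pX pY pZ,
      pX ⊚ iX = idm _, pY ⊚ iY = idm _ & pZ ⊚ iZ = idm _].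

Definition trivial_tri_f S : triangle C := Tri (idm S) (0 : Hom S zo) (0 : Hom zo (Sob S)).
Definition trivial_tri_g S : triangle C := Tri (0 : Hom zo S) (idm S) (0 : Hom S (Sob zo)).
Definition trivial_tri_h S : triangle C :=
  Tri (0 : Hom S zo) (0 : Hom zo (Sob S)) (idm (Sob S)).

Lemma retract_trivial_f (T : triangle C) S (v : Hom S (tX T)) (r : Hom (tY T) S) :
  tri_complex T -> r ⊚ (tf T ⊚ v) = idm S -> tri_retract (trivial_tri_f S) T.
Proof.
move=> [Hgf _ Hfh] Hr.
exists v, (tf T ⊚ v), 0, (r ⊚ tf T), r, 0; split => //.
- by split; rewrite /= ?comp_id_r ?comp0r // compA Hgf comp0l.
- by split; rewrite /= ?comp_id_l ?comp0l // Smor_comp comp_assoc Hfh comp0r.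
- by rewrite comp_assoc.
- by rewrite comp0l idm_zo.
Qed.

Lemma retract_trivial_g (T : triangle C) S (v : Hom S (tY T)) (r : Hom (tZ T) S) :
  tri_complex T -> r ⊚ (tg T ⊚ v) = idm S -> tri_retract (trivial_tri_g S) T.
Proof.
move=> [Hgf Hhg _] Hr.
exists 0, v, (tg T ⊚ v), 0, (r ⊚ tg T), r; split => //.
- by split; rewrite /= ?comp_id_r ?comp0r ?Smor0 ?comp0l // compA Hhg comp0l.
- by split; rewrite /= ?comp_id_l ?Smor0 ?comp0l // comp_assoc Hgf comp0r.
- by rewrite comp0l idm_zo.
- by rewrite comp_assoc.
Qed.

Lemma retract_trivial_h (T : triangle C) S (x : Hom S (tX T)) (p : Hom (tX T) S)
    (t : Hom (Sob S) (tZ T)) :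
  tri_complex T -> p ⊚ x = idm S -> Smor x = th T ⊚ t -> tri_retract (trivial_tri_h S) T.
Proof.
move=> [_ Hhg Hfh] Hpx Ht.
have Hfx : tf T ⊚ x = 0.
  by apply: Smor_eq0; rewrite Smor_comp Ht compA Hfh comp0l.
exists x, 0, t, p, 0, (Smor p ⊚ th T); split => //.
- by split; rewrite /= ?comp0r ?comp_id_r.
- by split; rewrite /= ?comp0l ?comp_id_l // comp_assoc Hhg comp0r.
- by rewrite comp0l idm_zo.
- by rewrite comp_assoc -Ht -Smor_comp Hpx Smor_id.
Qed.

Section RetractComplement.
Variables (T T1 : triangle C) (X' Y' Z' : Obj C).
Variables (iX : Hom (tX T1) (tX T)) (iY : Hom (tY T1) (tY T)) (iZ : Hom (tZ T1) (tZ T)).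
Variables (pX : Hom (tX T) (tX T1)) (pY : Hom (tY T) (tY T1)) (pZ : Hom (tZ T) (tZ T1)).
Variables (jX : Hom X' (tX T)) (jY : Hom Y' (tY T)) (jZ : Hom Z' (tZ T)).
Variables (qX : Hom (tX T) X') (qY : Hom (tY T) Y') (qZ : Hom (tZ T) Z').
Hypotheses (Mi : tri_morph iX iY iZ) (Mp : tri_morph pX pY pZ).
Hypotheses (DX : biprod_decomp iX pX jX qX) (DY : biprod_decomp iY pY jY qY)
  (DZ : biprod_decomp iZ pZ jZ qZ).

Definition compl_tri : triangle C :=
  Tri (qY ⊚ tf T ⊚ jX) (qZ ⊚ tg T ⊚ jY) (Smor qX ⊚ th T ⊚ jZ).

Lemma compl_tri_comm_f : tf T ⊚ jX = jY ⊚ tf compl_tri /\ qY ⊚ tf T = tf compl_tri ⊚ qX.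
Proof.
have [Mi1 _ _] := Mi; have [Mp1 _ _] := Mp.
exact: decomp_compl_comm DX DY (esym Mi1) Mp1.
Qed.

Lemma compl_tri_comm_g : tg T ⊚ jY = jZ ⊚ tg compl_tri /\ qZ ⊚ tg T = tg compl_tri ⊚ qY.
Proof.
have [_ Mi2 _] := Mi; have [_ Mp2 _] := Mp.
exact: decomp_compl_comm DY DZ (esym Mi2) Mp2.
Qed.

Lemma compl_tri_comm_h :
  th T ⊚ jZ = Smor jX ⊚ th compl_tri /\ Smor qX ⊚ th T = th compl_tri ⊚ qZ.
Proof.
have [_ _ Mi3] := Mi; have [_ _ Mp3] := Mp.
exact: decomp_compl_comm DZ (biprod_decomp_S DX) (esym Mi3) Mp3.
Qed.

Lemma compl_hom_exact : hom_exact T -> hom_exact compl_tri.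
Proof.
move=> [[Hgf Hhg Hfh] [EY EZ EX]].
have [Af1 Af2] := compl_tri_comm_f; have [Ag1 Ag2] := compl_tri_comm_g.
have [Ah1 Ah2] := compl_tri_comm_h.
have [_ DY2 _ _ _] := DY; have [_ DZ2 _ _ _] := DZ; have [_ DX2 _ _ _] := DX.
split; split => /=.
- by rewrite !compA -Ag2 (comp_assoc qZ) Hgf comp0r !comp0l.
- by rewrite !compA -Ah2 (comp_assoc (Smor qX)) Hhg comp0r !comp0l.
- by rewrite !compA -Smor_comp -Af2 Smor_comp (comp_assoc (Smor qY)) Hfh comp0r !comp0l.
- move=> W u Hu.
  have [v Hv] := EY W (jY ⊚ u) ltac:(by rewrite compA Ag1 comp_assoc Hu comp0r).
  by exists (qX ⊚ v); rewrite compA -Af2 comp_assoc -Hv compA DY2 comp_id_l.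
- move=> W u Hu.
  have [v Hv] := EZ W (jZ ⊚ u) ltac:(by rewrite compA Ah1 comp_assoc Hu comp0r).
  by exists (qY ⊚ v); rewrite compA -Ag2 comp_assoc -Hv compA DZ2 comp_id_l.
- move=> W u Hu.
  have [v Hv] := EX W (Smor jX ⊚ u)
    ltac:(by rewrite compA -Smor_comp Af1 Smor_comp comp_assoc Hu comp0r).
  exists (qZ ⊚ v).
  by rewrite compA -Ah2 comp_assoc -Hv compA -Smor_comp DX2 Smor_id comp_id_l.
Qed.

Lemma compl_tri_iso : tri_iso T (tsum T1 compl_tri).
Proof.
have [_ Af2] := compl_tri_comm_f; have [_ Ag2] := compl_tri_comm_g.
have [_ Ah2] := compl_tri_comm_h; have [Mp1 Mp2 Mp3] := Mp.
exists (bin1 ⊚ pX + bin2 ⊚ qX), (bin1 ⊚ pY + bin2 ⊚ qY), (bin1 ⊚ pZ + bin2 ⊚ qZ).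
split; [| exact: biprod_decomp_iso DX | exact: biprod_decomp_iso DY
        | exact: biprod_decomp_iso DZ].
split => /=.
- by rewrite pair_comp Mp1 {1}Af2 msumE copair_pair !compA.
- by rewrite pair_comp Mp2 {1}Ag2 msumE copair_pair !compA.
- rewrite Smor_add !Smor_comp comp_add_l -!compA Mp3 {1}Ah2.
  by rewrite !compA copair_pair.
Qed.

End RetractComplement.

End Suspension.

Section Triangulated.
Variable C : TriCat.
Implicit Types A B X Y Z W : Obj C.

Lemma dist_rot (T : triangle C) : dist T -> dist (rotate T).
Proof. by move/(TR2 T). Qed.

Lemma dist_zero_id W : dist (@Tri C zo W W 0 (idm W) 0).
Proof.
apply/(TR2 _); apply: (TR1_iso _ (TR1_id W)).
exists (idm W), (idm W), 0; split; try exact: iso_id.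
- by split; rewrite /= ?comp0r ?comp0l // Smor0 oppr0 comp0r.
- by apply: iso_between_zero; [exact: zo_zero | exact/Sob_zero/zo_zero].
Qed.

Lemma dist_iso_zero A B (w : Hom A B) :
  is_iso w -> dist (Tri w (0 : Hom B zo) (0 : Hom zo (Sob A))).
Proof.
move=> Hw; apply: (TR1_iso _ (TR1_id A)).
exists (idm A), w, (idm zo); split => //; try exact: iso_id.
by split; rewrite /= ?comp0r ?comp0l.
Qed.

Lemma split_triangle_zero (T : triangle C) :
  is_zero (tX T) -> is_zero (tY T) -> split_triangle T.
Proof.
move=> HX HY; exists T, [::]; split; first exact: tri_iso_refl.
  by left; exact: iso_between_zero.
exact: List.Forall_nil.
Qed.

Lemma dist_gf (T : triangle C) : dist T -> tg T ⊚ tf T = 0.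
Proof.
move=> HT.
have [c [_ Hc _]] := TR3 (T := Tri (idm (tX T)) 0 0) (T' := T) (a := idm (tX T)) (b := tf T)
  (TR1_id (tX T)) HT erefl.
by move: Hc => /= <-; rewrite comp0r.
Qed.

Lemma dist_hg (T : triangle C) : dist T -> th T ⊚ tg T = 0.
Proof. by move=> /dist_rot /dist_gf. Qed.

Lemma dist_fh (T : triangle C) : dist T -> Smor (tf T) ⊚ th T = 0.
Proof.
move=> /dist_rot /dist_rot /dist_gf /=.
by rewrite compNl => /eqP; rewrite oppr_eq0 => /eqP.
Qed.

Lemma dist_factor_f (T : triangle C) : dist T ->
  forall W (u : Hom W (tY T)), tg T ⊚ u = 0 -> exists v, u = tf T ⊚ v.
Proof.
move=> HT W u Hu.
have [c [_ _ Hc]] := TR3 (T := rotate (Tri (idm W) 0 0)) (T' := rotate T) (a := u) (b := 0)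
  (dist_rot (TR1_id W)) (dist_rot HT) ltac:(by rewrite /= comp0l Hu).
move: Hc; rewrite /= compNr compNl Smor_id comp_id_r => /eqP; rewrite eqr_opp => /eqP Hc.
have [v Hv] := Smor_surj c.
by exists v; apply: Smor_inj; rewrite Smor_comp Hv.
Qed.

Lemma dist_factor_g (T : triangle C) : dist T ->
  forall W (u : Hom W (tZ T)), th T ⊚ u = 0 -> exists v, u = tg T ⊚ v.
Proof. by move=> /dist_rot /dist_factor_f. Qed.

Lemma dist_factor_h (T : triangle C) : dist T ->
  forall W (u : Hom W (Sob (tX T))), Smor (tf T) ⊚ u = 0 -> exists v, u = th T ⊚ v.
Proof.
move=> /dist_rot /dist_rot /dist_factor_f /= H W u Hu; apply: H.
by rewrite compNl Hu oppr0.
Qed.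

Lemma dist_cofactor_g (T : triangle C) : dist T ->
  forall W (u : Hom (tY T) W), u ⊚ tf T = 0 -> exists v, u = v ⊚ tg T.
Proof.
move=> HT W u Hu.
have [c [_ Hc _]] := TR3 (T' := Tri 0 (idm W) 0) (a := 0) (b := u) HT (dist_zero_id W)
  ltac:(by rewrite /= comp0l Hu).
by exists c; move: Hc => /= ->; rewrite comp_id_l.
Qed.

Lemma dist_hom_exact (T : triangle C) : dist T -> hom_exact T.
Proof.
move=> HT; split; split; [exact: dist_gf | exact: dist_hg | exact: dist_fh | | | ].
- exact: dist_factor_f.
- exact: dist_factor_g.
- exact: dist_factor_h.
Qed.

Lemma dist_h0_split_mono (T : triangle C) : dist T -> th T = 0 ->
  exists r, r ⊚ tf T = idm (tX T).
Proof.
move=> HT Hh.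
have [v Hv] := dist_cofactor_g (dist_rot (dist_rot HT)) (u := idm _)
  ltac:(by rewrite /= comp_id_l Hh).
move: Hv => /=; rewrite compNr => Hv.
have [r Hr] := Smor_surj (- v).
by exists r; apply: Smor_inj; rewrite Smor_comp Hr compNl Smor_id.
Qed.

Lemma cone_split_mono_decomp A X Z (i : Hom A X) (q : Hom X Z) (k : Hom Z (Sob A))
    (p : Hom X A) :
  dist (Tri i q k) -> p ⊚ i = idm A -> exists j, biprod_decomp i p j q.
Proof.
move=> HT Hpi.
have Hqi : q ⊚ i = 0 := dist_gf HT.
have Hk : k = 0.
  by rewrite -(comp_id_l k) -Smor_id -Hpi Smor_comp comp_assoc (dist_fh HT) comp0r.
have [j0 /= Hj0] := dist_factor_g HT (u := idm Z) ltac:(by rewrite /= Hk comp0l).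
(* Correcting the section [j0] of [q] so that [p j = 0]. *)
pose j := j0 - i ⊚ (p ⊚ j0).
have Hqj : q ⊚ j = idm Z by rewrite /j compBr compA Hqi comp0l subr0 Hj0.
have Hpj : p ⊚ j = 0 by rewrite /j compBr compA Hpi comp_id_l subrr.
exists j; split => //.
pose e := idm X - i ⊚ p - j ⊚ q.
have Hqe : q ⊚ e = 0.
  by rewrite /e !compBr comp_id_r compA Hqi comp0l compA Hqj comp_id_l subr0 subrr.
have Hpe : p ⊚ e = 0.
  by rewrite /e !compBr comp_id_r compA Hpi comp_id_l compA Hpj comp0l subrr subr0.
have [w /= Hw] := dist_factor_f HT (u := e) Hqe.
have Hw0 : w = 0 by rewrite -(comp_id_l w) -Hpi comp_assoc -Hw Hpe.
move: Hw; rewrite Hw0 comp0r /e => /eqP; rewrite subr_eq0 subr_eq => /eqP ->.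
by rewrite addrC.
Qed.

Lemma split_mono_decomp A X (i : Hom A X) (p : Hom X A) : p ⊚ i = idm A ->
  exists X' (j : Hom X' X) (q : Hom X X'), biprod_decomp i p j q.
Proof.
move=> Hpi; have [Z [q [k HT]]] := TR1_ext i.
by have [j D] := cone_split_mono_decomp HT Hpi; exists Z, j, q.
Qed.

Lemma hom_exact_retract_split (T T1 : triangle C) : hom_exact T -> tri_retract T1 T ->
  exists T', hom_exact T' /\ tri_iso T (tsum T1 T').
Proof.
move=> HT [iX [iY [iZ [pX [pY [pZ [Mi Mp HX HY HZ]]]]]]].
have [X' [jX [qX DX]]] := split_mono_decomp HX.
have [Y' [jY [qY DY]]] := split_mono_decomp HY.
have [Z' [jZ [qZ DZ]]] := split_mono_decomp HZ.
exists (compl_tri jX jY jZ qX qY qZ); split.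
  exact: compl_hom_exact Mi Mp DX DY DZ HT.
exact: compl_tri_iso Mi Mp DX DY DZ.
Qed.

Lemma tri_subcat_bs (P : Obj C -> Prop) A B : tri_subcat P -> P A -> P B -> P (bs A B).
Proof.
move=> [_ Piso PS Pcone] PA PB.
have [Z [q [k HT]]] := TR1_ext (bin1 : Hom A (bs A B)).
have [j D] := cone_split_mono_decomp HT (bp1_in1 A B).
have PZ : P Z := Piso _ _ _ (decomp_compl_iso D (bs_decomp A B)) PB.
exact/(PS _).2/(Pcone _ (dist_rot (dist_rot HT)) PZ ((PS A).1 PA)).
Qed.

Lemma tri_subcat_orbit (P : Obj C -> Prop) G W : tri_subcat P -> P G -> shift_orbit G W -> P W.
Proof.
move=> [_ Piso PS _] PG; elim=> [//|W1 W2 f Hf _|W1 _|W1 _].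
- exact: Piso f Hf.
- exact: (PS W1).1.
- exact: (PS W1).2.
Qed.

Definition left_orth_orbit X A := forall W, shift_orbit X W -> forall u : Hom A W, u = 0.

Lemma left_orth_orbit_S X A : left_orth_orbit X A -> left_orth_orbit X (Sob A).
Proof.
move=> HA W HW u.
have [W0 [psi Hpsi]] := Sob_ess W.
have HW0 : shift_orbit X W0 := orbit_Sinv (orbit_iso_inv Hpsi HW).
have [psi' [_ Hpsi']] := Hpsi.
have [u0 Hu0] := Smor_surj (psi' ⊚ u).
rewrite (HA W0 HW0 u0) Smor0 in Hu0.
by rewrite -(comp_id_l u) -Hpsi' comp_assoc -Hu0 comp0r.
Qed.

Lemma left_orth_orbit_thick X : thick_subcat (left_orth_orbit X).
Proof.
split; [split|].
- by move=> W _ u; exact: hom_from_zero (zo_zero C).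
- move=> X1 Y1 f [g [H1 H2]] HQ W HW u.
  by rewrite -(comp_id_r u) -H2 compA (HQ W HW (u ⊚ f)) comp0l.
- move=> A; split; first exact: left_orth_orbit_S.
  by move=> HQ W HW u; apply: Smor_eq0; exact: (HQ (Sob W) (orbit_S HW) (Smor u)).
- move=> T HT HX HY W HW u.
  have [v Hv] := dist_cofactor_g (dist_rot HT) (u := u) (HY W HW _).
  by rewrite Hv (left_orth_orbit_S HX HW v) comp0l.
- move=> A B HQ W HW u.
  by rewrite -(comp_id_r u) -(bp1_in1 A B) compA (HQ W HW (u ⊚ bp1)) comp0l.
Qed.

(* [G] is not left orthogonal to the orbit of [X], else neither is [X] itself. *)
Lemma thick_generator_detects G X : thick_generator G -> ~ is_zero X ->
  exists S, shift_orbit G S /\ exists s : Hom S X, s != 0.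
Proof.
move=> HG HX.
have [W [HW [u Hu]]] : exists W, shift_orbit X W /\ exists u : Hom G W, u != 0.
  apply: NNPP => Hn; apply: HX.
  have HQG : left_orth_orbit X G.
    move=> W HW u; apply: NNPP => Hu; apply: Hn.
    by exists W; split => //; exists u; apply/eqP.
  exact (HG _ (left_orth_orbit_thick X) HQG X X (@orbit_refl _ X) (idm X)).
exact: orbit_hom_transport HW G u (@orbit_refl _ G) Hu.
Qed.

Lemma thick_generator_detects_S G X : thick_generator G -> ~ is_zero X ->
  exists S, shift_orbit G S /\ exists s : Hom (Sob S) X, s != 0.
Proof.
move=> HG /(thick_generator_detects HG) [S [HS [s Hs]]].
have [S0 [psi Hpsi]] := Sob_ess S.
exists S0; split; first exact: orbit_Sinv (orbit_iso_inv Hpsi HS).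
by exists (s ⊚ psi); exact: comp_iso_neq0.
Qed.

End Triangulated.

Section Rank.
Variable C : TriCat.
Variable rho : forall X Y : Obj C, Hom X Y -> Rdefinitions.R.
Hypothesis rho_rank : rank_function rho.
Hypothesis rho_faithful : morphism_faithful rho.
Hypothesis rho_int : forall X Y (f : Hom X Y), exists z : int, rho f = z%:~R.
Implicit Types A B X Y Z S : Obj C.

Local Notation rk f := (rho f).

Lemma rk_ge0 X Y (f : Hom X Y) : 0 <= rk f.
Proof. by case: rho_rank. Qed.

Lemma rk_S X Y (f : Hom X Y) : rk (Smor f) = rk f.
Proof. by case: rho_rank. Qed.

Lemma rk_msum X1 X2 Y1 Y2 (f : Hom X1 Y1) (g : Hom X2 Y2) : rk (msum f g) = rk f + rk g.
Proof. by case: rho_rank. Qed.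

Lemma rk_dist (T : triangle C) : dist T -> rk (tf T) + rk (tg T) = rk (idm (tY T)).
Proof. by case: rho_rank => _ _ _; apply. Qed.

Lemma rk_ge1 X Y (f : Hom X Y) : f != 0 -> 1 <= rk f.
Proof.
move=> /rho_faithful; have := rk_ge0 f; have [z ->] := rho_int f.
by rewrite ler0z intr_eq0 ler1z; lia.
Qed.

Lemma rk_eq0 X Y (f : Hom X Y) : rk f = 0 -> f = 0.
Proof. by move=> E; case: (eqVneq f 0) => // /rk_ge1; rewrite E => ?; exfalso; lra. Qed.

Lemma rk_id_zo : rk (idm (@zo C)) = 0.
Proof. by have := rk_dist (TR1_id (@zo C)); rewrite /= -idm_zo; lra. Qed.

Lemma rk_to_zo A : rk (0 : Hom A (@zo C)) = 0.
Proof. by have := rk_dist (TR1_id A); rewrite /=; lra. Qed.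

Lemma rk_iso_cod A B (w : Hom A B) : is_iso w -> rk w = rk (idm B).
Proof. by move=> /dist_iso_zero /rk_dist /=; rewrite rk_to_zo addr0. Qed.

Lemma rk_iso_dom A B (w : Hom A B) : is_iso w -> rk w = rk (idm A).
Proof.
move=> /iso_opp /dist_iso_zero H.
have := rk_dist (dist_rot H); have := rk_dist (dist_rot (dist_rot H)).
by rewrite /= SmorN opprK -Smor_id !rk_S rk_to_zo rk_id_zo; lra.
Qed.

Lemma rk_id_iso A B (u : Hom A B) : is_iso u -> rk (idm A) = rk (idm B).
Proof. by move=> Hu; rewrite -(rk_iso_dom Hu) (rk_iso_cod Hu). Qed.

Lemma rk_id_zero X : is_zero X -> rk (idm X) = 0.
Proof.
move=> HX; rewrite -rk_id_zo; apply: rk_id_iso (0 : Hom X zo) _.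
exact: iso_between_zero (zo_zero C).
Qed.

Lemma rk_id_S X : rk (idm (Sob X)) = rk (idm X).
Proof. by rewrite -Smor_id rk_S. Qed.

Lemma rk_id_bs A B : rk (idm (bs A B)) = rk (idm A) + rk (idm B).
Proof. by rewrite -msum_id rk_msum. Qed.

Lemma rk_id_decomp A X X' (i : Hom A X) (p : Hom X A) (j : Hom X' X) (q : Hom X X') :
  biprod_decomp i p j q -> rk (idm X) = rk (idm A) + rk (idm X').
Proof. by move=> /biprod_decomp_iso /rk_id_iso ->; rewrite rk_id_bs. Qed.

Lemma rank_one_split_mono S A (u : Hom S A) : rk (idm S) = 1 -> u != 0 ->
  exists r, r ⊚ u = idm S.
Proof.
move=> HS Hu; have [Z [g [h HT]]] := TR1_ext u.
have := rk_dist (dist_rot (dist_rot HT)); rewrite /= rk_id_S HS -SmorN rk_S.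
have := rk_ge1 (f := - u); rewrite oppr_eq0 => /(_ Hu) Hge1 E.
apply: (dist_h0_split_mono HT); apply: rk_eq0 => /=; have := rk_ge0 h; lra.
Qed.

Lemma orbit_rank_one G W : rk (idm G) = 1 -> shift_orbit G W -> rk (idm W) = 1.
Proof.
move=> HG; elim=> [//|W1 W2 f Hf _ <-|W1 _ <-|W1 _]; last by rewrite rk_id_S.
- by rewrite (rk_id_iso Hf).
- exact: rk_id_S.
Qed.

Definition tri_rank (T : triangle C) := rk (idm (tX T)) + rk (idm (tY T)) + rk (idm (tZ T)).

Lemma tri_rank_ge0 T : 0 <= tri_rank T.
Proof.
have := rk_ge0 (idm (tX T)); have := rk_ge0 (idm (tY T)); have := rk_ge0 (idm (tZ T)).
by rewrite /tri_rank; lra.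
Qed.

Lemma rk_bound X Y (f : Hom X Y) : exists n : nat, rk f <= n%:R.
Proof. by have [z Hz] := rho_int f; exists `|z|%N; rewrite Hz natr_absz ler_int ler_norm. Qed.

Lemma tri_rank_bound T : exists n : nat, tri_rank T <= n%:R.
Proof.
have [n1 H1] := rk_bound (idm (tX T)); have [n2 H2] := rk_bound (idm (tY T)).
have [n3 H3] := rk_bound (idm (tZ T)).
by exists (n1 + n2 + n3)%N; rewrite /tri_rank !natrD; lra.
Qed.

Lemma tri_rank_iso T T' : tri_iso T T' -> tri_rank T = tri_rank T'.
Proof.
move=> [a [b [c [_ Ha Hb Hc]]]].
by rewrite /tri_rank (rk_id_iso Ha) (rk_id_iso Hb) (rk_id_iso Hc).
Qed.

Lemma tri_rank_tsum T1 T2 : tri_rank (tsum T1 T2) = tri_rank T1 + tri_rank T2.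
Proof. by rewrite /tri_rank /= !rk_id_bs; lra. Qed.

Lemma tri_rank_trivial_f S : tri_rank (trivial_tri_f S) = rk (idm S) + rk (idm S).
Proof. by rewrite /tri_rank /= rk_id_zo addr0. Qed.

Lemma tri_rank_trivial_g S : tri_rank (trivial_tri_g S) = rk (idm S) + rk (idm S).
Proof. by rewrite /tri_rank /= rk_id_zo add0r. Qed.

Lemma tri_rank_trivial_h S : tri_rank (trivial_tri_h S) = rk (idm S) + rk (idm S).
Proof. by rewrite /tri_rank /= rk_id_zo addr0 rk_id_S. Qed.

Definition has_iso_summand (T : triangle C) :=
  exists T1, [/\ tri_retract T1 T, has_iso_arrow T1 & 1 <= tri_rank T1].

Section Generator.
Variable G : Obj C.
Hypothesis G_thick : thick_generator G.
Hypothesis G_rank : rk (idm G) = 1.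

Lemma summand_at_X T : hom_exact T -> ~ is_zero (tX T) -> has_iso_summand T.
Proof.
move=> [HC [_ _ Hfac]] /(thick_generator_detects G_thick) [S [HS [s Hs]]].
have HS1 := orbit_rank_one G_rank HS.
have [Hfs|Hfs] := eqVneq (tf T ⊚ s) 0.
- have [t Ht] := Hfac _ (Smor s) ltac:(by rewrite -Smor_comp Hfs Smor0).
  have [p Hp] := rank_one_split_mono HS1 Hs.
  exists (trivial_tri_h S); split; first exact: retract_trivial_h HC Hp Ht.
    by right; right; exact: iso_id.
  by rewrite tri_rank_trivial_h HS1; lra.
- have [r Hr] := rank_one_split_mono HS1 Hfs.
  exists (trivial_tri_f S); split; first exact: retract_trivial_f HC Hr.
    by left; exact: iso_id.
  by rewrite tri_rank_trivial_f HS1; lra.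
Qed.

Lemma summand_at_Y T : hom_exact T -> ~ is_zero (tY T) -> has_iso_summand T.
Proof.
move=> [HC [Hfac _ _]] /(thick_generator_detects G_thick) [S [HS [s Hs]]].
have HS1 := orbit_rank_one G_rank HS.
have [Hgs|Hgs] := eqVneq (tg T ⊚ s) 0.
- have [v Hv] := Hfac _ s Hgs; rewrite Hv in Hs.
  have [r Hr] := rank_one_split_mono HS1 Hs.
  exists (trivial_tri_f S); split; first exact: retract_trivial_f HC Hr.
    by left; exact: iso_id.
  by rewrite tri_rank_trivial_f HS1; lra.
- have [r Hr] := rank_one_split_mono HS1 Hgs.
  exists (trivial_tri_g S); split; first exact: retract_trivial_g HC Hr.
    by right; left; exact: iso_id.
  by rewrite tri_rank_trivial_g HS1; lra.
Qed.

Lemma summand_at_Z T : hom_exact T -> ~ is_zero (tZ T) -> has_iso_summand T.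
Proof.
move=> [HC [_ Hfac _]] /(thick_generator_detects_S G_thick) [S [HS [s Hs]]].
have HS1 := orbit_rank_one G_rank HS.
have HSS1 : rk (idm (Sob S)) = 1 by rewrite rk_id_S.
have [Hhs|Hhs] := eqVneq (th T ⊚ s) 0.
- have [v Hv] := Hfac _ s Hhs; rewrite Hv in Hs.
  have [r Hr] := rank_one_split_mono HSS1 Hs.
  exists (trivial_tri_g (Sob S)); split; first exact: retract_trivial_g HC Hr.
    by right; left; exact: iso_id.
  by rewrite tri_rank_trivial_g HSS1; lra.
- have [x Hx] := Smor_surj (th T ⊚ s).
  have Hx0 : x != 0 by apply: contraNneq Hhs => E; rewrite -Hx E Smor0.
  have [p Hp] := rank_one_split_mono HS1 Hx0.
  exists (trivial_tri_h S); split; first exact: retract_trivial_h HC Hp Hx.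
    by right; right; exact: iso_id.
  by rewrite tri_rank_trivial_h HS1; lra.
Qed.

Lemma hom_exact_zero_or_summand T : hom_exact T ->
  [/\ is_zero (tX T), is_zero (tY T) & is_zero (tZ T)] \/ has_iso_summand T.
Proof.
move=> HT.
have [HX|/eqP HX] := eqVneq (idm (tX T)) 0; last by right; exact: summand_at_X.
have [HY|/eqP HY] := eqVneq (idm (tY T)) 0; last by right; exact: summand_at_Y.
have [HZ|/eqP HZ] := eqVneq (idm (tZ T)) 0; last by right; exact: summand_at_Z.
by left.
Qed.

Lemma hom_exact_split n T : hom_exact T -> tri_rank T <= n%:R -> split_triangle T.
Proof.
elim: n T => [|n IH] T HT Hn.
all: case: (hom_exact_zero_or_summand HT) => [[HX HY _]|[T1 [HR HT1 Hrk1]]];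
  first exact: split_triangle_zero.
all: have [T' [HT' Hiso]] := hom_exact_retract_split HT HR.
all: have := tri_rank_iso Hiso; rewrite tri_rank_tsum => E; have := tri_rank_ge0 T'.
  by lra.
move=> Hge0; have HT'n : tri_rank T' <= n%:R by rewrite -natr1 in Hn; lra.
have [T0 [Ts [Hiso' HT0 HTs]]] := IH T' HT' HT'n.
exists T1, (T0 :: Ts); split => //.
  exact: tri_iso_trans Hiso (tri_iso_tsum T1 Hiso').
exact: List.Forall_cons.
Qed.

Lemma tri_subcat_rank_bounded (P : Obj C -> Prop) : tri_subcat P -> P G ->
  forall n Y, rk (idm Y) <= n%:R -> P Y.
Proof.
move=> HP PG; have [PZ Piso _ _] := HP.
elim=> [|n IH] Y HY.
all: have [HYz|/eqP HYz] := eqVneq (idm Y) 0;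
  first exact: Piso (iso_between_zero (0 : Hom zo Y) (zo_zero C) HYz) PZ.
all: have [S [HS [s Hs]]] := thick_generator_detects G_thick HYz.
all: have HS1 := orbit_rank_one G_rank HS.
all: have [r Hr] := rank_one_split_mono HS1 Hs.
all: have [Y' [j [q D]]] := split_mono_decomp Hr.
all: have := rk_id_decomp D; rewrite HS1 => E; have := rk_ge0 (idm Y').
  by move=> ?; exfalso; lra.
move=> ?; have PY' : P Y' by apply: IH; rewrite -natr1 in HY; lra.
have PSY' := tri_subcat_bs HP (tri_subcat_orbit HP PG HS) PY'.
have [g Hg] := iso_sym (biprod_decomp_iso D).
exact: Piso _ _ g Hg PSY'.
Qed.

Lemma generator_tri_generator : tri_generator G.
Proof.
move=> P HP PG Y; have [n Hn] := rk_bound (idm Y).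
exact: tri_subcat_rank_bounded HP PG n Y Hn.
Qed.

Lemma generator_nonzero : ~ is_zero G.
Proof. by move/rk_id_zero; rewrite G_rank => /eqP; rewrite oner_eq0. Qed.

Lemma generator_indecomposable : indecomposable G.
Proof.
split; first exact: generator_nonzero.
move=> A B f /rk_id_iso; rewrite rk_id_bs G_rank => E.
have [HA|HA] := eqVneq (idm A) 0; first by left.
have [HB|HB] := eqVneq (idm B) 0; first by right.
by have := rk_ge1 HA; have := rk_ge1 HB => ? ?; exfalso; lra.
Qed.

End Generator.

End Rank.

Unset Implicit Arguments.

Theorem proposition2p23 (C : TriCat) (rho : forall X Y : Obj C, Defs.Hom X Y -> Rdefinitions.R) :
  rank_function rho -> morphism_faithful rho -> prime_rank rho ->
  simple_tricat C.
Proof.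
move=> Hrank Hfaith [Hint [G [HG HG1]]]; split.
- move=> T /dist_hom_exact HT; have [n Hn] := tri_rank_bound Hint T.
  exact (hom_exact_split Hrank Hfaith Hint HG HG1 HT Hn).
- exists G; split; first exact (generator_nonzero Hrank HG1).
  split; first exact (generator_indecomposable Hrank Hfaith Hint HG1).
  exact (generator_tri_generator Hrank Hfaith Hint HG HG1).
Qed.
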